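(* In the setting of the augmented matrices $\widehat{\mathbf A}^k=\mathbf S^k\mathbf C^k$ (column-stochastic, with all entries of the rows indexed by $\mathcal V$ of $\widehat{\mathbf A}^{k+K_1-1:k}$ bounded below by $\eta=\bar m^{K_1}$), there exists a sequence of stochastic vectors $\{\boldsymbol\xi^k\}_{k\in\mathbb N_0}\subset\mathbb R^S$ such that for all $k\ge t\ge0$ and all $i,j\in\{1,\dots,S\}$, $$|\widehat A^{k:t}_{ij}-\xi_i^k|\le C\rho^{k-t},\qquad C=2\frac{1+\bar m^{-K_1}}{1-\bar m^{K_1}},\quad\rho=(1-\bar m^{K_1})^{1/K_1}\in(0,1).$$ Furthermore $\xi_i^k\ge\eta$ for all $i\in\mathcal V$ and $k\in\mathbb N_0$.
   Context: $\mathcal G=(\mathcal V,\mathcal E)$, $\mathcal V=\{1,\dots,I\}$, strongly connected digraph without self-loops; $\mathcal N_i^{\rm in}=\{j:(j,i)\in\mathcal E\}$, $\mathcal N_i^{\rm out}=\{j:(i,j)\in\mathcal E\}$. $A=(a_{ij})$ column-stochastic with $a_{ii}\ge\bar m$, $a_{ij}\ge\bar m$ for $(j,i)\in\mathcal E$, $a_{ij}=0$ otherwise, $\bar m\in(0,1)$. Asynchrony model: $(i^k,\mathbf d^k)$, $i^k\in\mathcal V$, $\mathbf d^k=(d_j^k)_{j\in\mathcal N^{\rm in}_{i^k}}$, every agent appears among $i^k,\dots,i^{k+T-1}$ for all $k$, $0\le d_j^k\le D$; $K_1=(2I-1)T+ID$. Counters: $\tau_{ij}^{-1}=-D$; $\tau_{i^kj}^k=\max(\tau_{i^kj}^{k-1},k-d_j^k)$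 for $j\in\mathcal N^{\rm in}_{i^k}$, unchanged otherwise. $\widehat{\mathcal V}=\mathcal V\cup\{(j,i)^d:(j,i)\in\mathcal E,\ 0\le d\le D\}$, $S=|\widehat{\mathcal V}|$. $R^k=\{(j,i^k)^d:j\in\mathcal N^{\rm in}_{i^k},\ k-\tau^k_{i^kj}\le d\le D\}$. $\mathbf C^k$: $C^k_{i^k m}=1$ for $m\in R^k$, $C^k_{mm}=1$ for $m\notin R^k$, else $0$. $\mathbf S^k$: $S^k_{(i^k,j)^0,i^k}=a_{ji^k}$ ($j\in\mathcal N^{\rm out}_{i^k}$), $S^k_{i^ki^k}=a_{i^ki^k}$, $S^k_{hh}=1$ for $h\in\mathcal V\setminus\{i^k\}$, $S^k_{(i,j)^{d+1},(i,j)^d}=1$ ($0\le d\le D-1$), $S^k_{(i,j)^D,(i,j)^D}=1$, else $0$. $\widehat{\mathbf A}^{k:t}=\widehat{\mathbf A}^k\cdots\widehat{\mathbf A}^t$. *)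

From Stdlib Require Import Reals Lra Lia ZArith Arith List Bool.
From Stdlib Require Import Relations.Relation_Operators.
Import ListNotations.
Open Scope R_scope.

(* Agents are 0,...,I-1 (the paper's 1,...,I shifted by one).
   The digraph is given by a boolean edge predicate E : (j,i) in E iff E j i = true. *)

Definition lsum {X : Type} (l : list X) (f : X -> R) : R :=
  fold_right Rplus 0 (map f l).

(* Augmented node set: agents  Ag i  and buffer nodes  Buf j i d  = (j,i)^d. *)
Inductive node : Type :=
| Ag : nat -> node
| Buf : nat -> nat -> nat -> node.

Definition node_eq_dec (p q : node) : {p = q} + {p <> q}.
Proof. decide equality; apply Nat.eq_dec. Defined.

(* The (duplicate-free) enumeration of hat V = V ∪ {(j,i)^d : (j,i) ∈ E, 0 <= d <= D};
   S = length (nodes I E D). *)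
Definition nodes (I : nat) (E : nat -> nat -> bool) (D : nat) : list node :=
  map Ag (seq 0 I) ++
  flat_map (fun j => flat_map (fun i =>
     if E j i then map (Buf j i) (seq 0 (S D)) else []) (seq 0 I)) (seq 0 I).

(* Counters:  tauS n i j = tau_{ij}^{n-1};  tauS 0 = tau^{-1} = -D. *)
Fixpoint tauS (E : nat -> nat -> bool) (D : nat) (ik : nat -> nat)
    (dk : nat -> nat -> nat) (n i j : nat) : Z :=
  match n with
  | O => (- Z.of_nat D)%Z
  | S k =>
      let prev := tauS E D ik dk k i j in
      if Nat.eqb i (ik k) && E j i
      then Z.max prev (Z.of_nat k - Z.of_nat (dk k j))%Z
      else prev
  end.

Definition tau E D ik dk (k i j : nat) : Z := tauS E D ik dk (S k) i j.

Definition inRk E D ik dk (k : nat) (p : node) : bool :=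
  match p with
  | Ag _ => false
  | Buf j i d =>
      Nat.eqb i (ik k) && E j i &&
      Z.leb (Z.of_nat k - tau E D ik dk k i j)%Z (Z.of_nat d) &&
      Nat.leb d D
  end.

Definition node_eqb (p q : node) : bool :=
  if node_eq_dec p q then true else false.

Definition Cmat E D ik dk (k : nat) (p q : node) : R :=
  if inRk E D ik dk k q
  then (if node_eqb p (Ag (ik k)) then 1 else 0)
  else (if node_eqb p q then 1 else 0).

Definition Smat (A : nat -> nat -> R) E D (ik : nat -> nat) (k : nat) (p q : node) : R :=
  match p, q with
  | Buf i j 0, Ag h =>
      if Nat.eqb i (ik k) && Nat.eqb h (ik k) && E i j then A j (ik k) else 0
  | Ag h', Ag h =>
      if Nat.eqb h' h then (if Nat.eqb h (ik k) then A h h else 1) else 0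
  | Buf i j (S d), Buf i' j' d' =>
      if Nat.eqb i i' && Nat.eqb j j' && Nat.eqb d d' && Nat.ltb d D then 1
      else if Nat.eqb i i' && Nat.eqb j j' && Nat.eqb (S d) d' && Nat.eqb d' D then 1
      else 0
  | Buf i j 0, Buf i' j' d' =>
      if Nat.eqb i i' && Nat.eqb j j' && Nat.eqb d' 0 && Nat.eqb D 0 then 1 else 0
  | _, _ => 0
  end.

Definition mmul (ns : list node) (M N : node -> node -> R) (p q : node) : R :=
  lsum ns (fun r => M p r * N r q).

Definition Ahat A I E D ik dk (k : nat) : node -> node -> R :=
  mmul (nodes I E D) (Smat A E D ik k) (Cmat E D ik dk k).

(* AprodN t n = hat A^{t+n : t} = hat A^{t+n} ... hat A^t *)
Fixpoint AprodN A I E D ik dk (t n : nat) : node -> node -> R :=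
  match n with
  | O => Ahat A I E D ik dk t
  | S n' => mmul (nodes I E D) (Ahat A I E D ik dk (t + S n')) (AprodN A I E D ik dk t n')
  end.

Definition Aprod A I E D ik dk (k t : nat) : node -> node -> R :=
  AprodN A I E D ik dk t (k - t).

Definition K1 (I T D : nat) : nat := (2 * I - 1) * T + I * D.

From Stdlib Require Import Reals ZArith Arith List Lia Lra FinFun Classical Bool.
From Stdlib Require Import Relations.Relation_Operators.
Import ListNotations.
Open Scope R_scope.

(* Following the mass along
   the graph (an agent writes into its outgoing buffers when active, buffer contents age one
   slot per step and are read by the receiver at the latest when it is active with the
   oldest slot), every node reaches every agent within [K1] steps with weight at least
   [m ^ K1].  So every window of [K1] consecutive factors has its agent rows bounded below by
   [eta = m ^ K1] and contracts the l1-distance between columns by [1 - eta] (Dobrushin).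
   The columns of [hat A^{k:t}] therefore coalesce geometrically; [xi^k] is a column of
   [hat A^{k:0}], and the rate [(1 - eta) ^ ((k - t + 1) / K1)] is bounded by [C rho^(k-t)]. *)

Section ListSums.
Context {X : Type}.

Lemma lsum_nil (f : X -> R) : lsum [] f = 0.
Proof. reflexivity. Qed.

Lemma lsum_cons (x : X) l f : lsum (x :: l) f = f x + lsum l f.
Proof. reflexivity. Qed.

Lemma lsum_app (l1 l2 : list X) f : lsum (l1 ++ l2) f = lsum l1 f + lsum l2 f.
Proof. induction l1; cbn [app]; [rewrite lsum_nil; lra|]. rewrite !lsum_cons, IHl1. lra. Qed.

Lemma lsum_ext_in (l : list X) f g : (forall x, In x l -> f x = g x) -> lsum l f = lsum l g.
Proof.
  induction l as [|a l IH]; intros H; [reflexivity|].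
  assert (Hl : forall x, In x l -> f x = g x) by (intros; apply H; simpl; auto).
  rewrite !lsum_cons, H, IH by (simpl; auto). reflexivity.
Qed.

Lemma lsum_plus (l : list X) f g : lsum l (fun x => f x + g x) = lsum l f + lsum l g.
Proof. induction l; [rewrite !lsum_nil; lra|]. rewrite !lsum_cons, IHl. lra. Qed.

Lemma lsum_minus (l : list X) f g : lsum l (fun x => f x - g x) = lsum l f - lsum l g.
Proof. induction l; [rewrite !lsum_nil; lra|]. rewrite !lsum_cons, IHl. lra. Qed.

Lemma lsum_scal (l : list X) c f : lsum l (fun x => c * f x) = c * lsum l f.
Proof. induction l; [rewrite !lsum_nil; lra|]. rewrite !lsum_cons, IHl. lra. Qed.

Lemma lsum_scalr (l : list X) c f : lsum l (fun x => f x * c) = lsum l f * c.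
Proof. induction l; [rewrite !lsum_nil; lra|]. rewrite !lsum_cons, IHl. lra. Qed.

Lemma lsum_zero (l : list X) f : (forall x, In x l -> f x = 0) -> lsum l f = 0.
Proof.
  induction l as [|a l IH]; intros H; [reflexivity|].
  assert (Hl : forall x, In x l -> f x = 0) by (intros; apply H; simpl; auto).
  rewrite lsum_cons, H, IH by (simpl; auto). lra.
Qed.

Lemma lsum_le (l : list X) f g : (forall x, In x l -> f x <= g x) -> lsum l f <= lsum l g.
Proof.
  induction l as [|a l IH]; intros H; [rewrite !lsum_nil; lra|].
  rewrite !lsum_cons. apply Rplus_le_compat; [apply H; simpl; auto|].
  apply IH. intros; apply H; simpl; auto.
Qed.

Lemma lsum_nonneg (l : list X) f : (forall x, In x l -> 0 <= f x) -> 0 <= lsum l f.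
Proof.
  intros H. rewrite <- (lsum_zero l (fun _ => 0)) by auto. apply lsum_le; auto.
Qed.

Lemma lsum_term (l : list X) f x :
  In x l -> (forall y, In y l -> 0 <= f y) -> f x <= lsum l f.
Proof.
  induction l as [|a l IH]; intros Hx H; [destruct Hx|]. rewrite lsum_cons.
  assert (0 <= f a) by (apply H; simpl; auto).
  assert (0 <= lsum l f) by (apply lsum_nonneg; intros; apply H; simpl; auto).
  destruct Hx as [<-|Hx]; [lra|].
  assert (f x <= lsum l f) by (apply IH; auto; intros; apply H; simpl; auto). lra.
Qed.

Lemma lsum_abs (l : list X) f : Rabs (lsum l f) <= lsum l (fun x => Rabs (f x)).
Proof.
  induction l; [rewrite !lsum_nil, Rabs_R0; lra|]. rewrite !lsum_cons.
  eapply Rle_trans; [apply Rabs_triang | lra].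
Qed.

Lemma lsum_indicator (eqb : X -> X -> bool) (l : list X) x g :
  (forall a b, eqb a b = true <-> a = b) -> NoDup l -> In x l ->
  lsum l (fun r => if eqb r x then g r else 0) = g x.
Proof.
  intros Heq. induction l as [|a l IH]; intros Hnd Hx; [destruct Hx|].
  inversion Hnd as [|? ? Ha Hnd']; subst. rewrite lsum_cons.
  destruct (eqb a x) eqn:Hax.
  - apply Heq in Hax. subst a. rewrite lsum_zero; [lra|].
    intros y Hy. destruct (eqb y x) eqn:Hyx; auto. apply Heq in Hyx. subst. contradiction.
  - assert (a <> x) by (intros ->; rewrite (proj2 (Heq x x) eq_refl) in Hax; discriminate).
    destruct Hx as [|Hx]; [contradiction|]. rewrite IH; auto. lra.
Qed.

End ListSums.

Lemma lsum_map {X Y : Type} (g : Y -> X) l f : lsum (map g l) f = lsum l (fun y => f (g y)).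
Proof. induction l; [reflexivity|]. cbn [map]. rewrite !lsum_cons, IHl. reflexivity. Qed.

Lemma lsum_flat_map {X Y : Type} (g : Y -> list X) l f :
  lsum (flat_map g l) f = lsum l (fun y => lsum (g y) f).
Proof. induction l; [reflexivity|]. cbn [flat_map]. rewrite lsum_app, lsum_cons, IHl. reflexivity. Qed.

Lemma NoDup_flat_map_key {X Y : Type} (g : Y -> list X) (key : X -> Y) l :
  NoDup l -> (forall y, In y l -> NoDup (g y)) ->
  (forall y z, In y l -> In z (g y) -> key z = y) -> NoDup (flat_map g l).
Proof.
  induction l as [|a l IH]; intros Hnd Hg Hk; simpl; [constructor|].
  inversion Hnd; subst. apply NoDup_app.
  - apply Hg; simpl; auto.
  - apply IH; auto; intros; [apply Hg | apply Hk]; simpl; auto.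
  - intros z Hz Hz'. apply in_flat_map in Hz' as [y [Hy Hzy]].
    assert (key z = a) by (apply Hk; simpl; auto).
    assert (key z = y) by (apply Hk; simpl; auto). congruence.
Qed.

Lemma lsum_swap {X Y : Type} (l1 : list X) (l2 : list Y) f :
  lsum l1 (fun a => lsum l2 (fun b => f a b)) = lsum l2 (fun b => lsum l1 (fun a => f a b)).
Proof.
  induction l1 as [|a l1 IH].
  - rewrite lsum_nil. symmetry. apply lsum_zero. reflexivity.
  - rewrite lsum_cons, IH, <- lsum_plus. apply lsum_ext_in. reflexivity.
Qed.

Definition walk (rel : nat -> nat -> Prop) (l h i : nat) : Prop :=
  exists f : nat -> nat, f 0%nat = h /\ f l = i /\ forall k, (k < l)%nat -> rel (f k) (f (S k)).

Lemma clos_trans_walk rel h i : clos_trans nat rel h i -> exists l, walk rel l h i.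
Proof.
  induction 1 as [x y Hxy | x y z _ [l1 [f1 [A1 [B1 C1]]]] _ [l2 [f2 [A2 [B2 C2]]]]].
  - exists 1%nat, (fun k => if Nat.eqb k 0 then x else y). repeat split.
    intros k Hk. replace k with 0%nat by lia. exact Hxy.
  - exists (l1 + l2)%nat, (fun k => if Nat.leb k l1 then f1 k else f2 (k - l1)%nat).
    repeat split.
    + exact A1.
    + destruct (Nat.leb_spec (l1 + l2) l1).
      * replace l2 with 0%nat in * by lia. rewrite Nat.add_0_r. congruence.
      * rewrite <- B2. f_equal. lia.
    + intros k Hk. destruct (Nat.leb_spec k l1), (Nat.leb_spec (S k) l1); try lia.
      * apply C1; lia.
      * replace k with l1 by lia. replace (S l1 - l1)%nat with 1%nat by lia.
        rewrite B1, <- A2. apply C2. lia.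
      * replace (S k - l1)%nat with (S (k - l1)) by lia. apply C2; lia.
Qed.

Lemma pigeonhole n (f : nat -> nat) :
  (forall k, (k <= n)%nat -> (f k < n)%nat) -> exists a b, (a < b <= n)%nat /\ f a = f b.
Proof.
  intros Hf. apply NNPP. intros Hno.
  assert (Hnd : NoDup (map f (seq 0 (S n)))).
  { apply (NoDup_nth _ (f 0%nat)). rewrite length_map, length_seq. intros a b Ha Hb.
    rewrite !map_nth, !seq_nth by lia. intros Hab.
    destruct (Nat.lt_total a b) as [Hlt | [Heq | Hlt]]; [| exact Heq |];
      exfalso; apply Hno; [exists a, b | exists b, a]; split; auto; lia. }
  assert (Hincl : incl (map f (seq 0 (S n))) (seq 0 n)).
  { intros y Hy. apply in_map_iff in Hy as [k [<- Hk]]. apply in_seq in Hk.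
    apply in_seq. specialize (Hf k). lia. }
  pose proof (NoDup_incl_length Hnd Hincl) as Hlen.
  rewrite length_map, !length_seq in Hlen. lia.
Qed.

Lemma walk_shorten rel n : (forall a b, rel a b -> (b < n)%nat) ->
  forall l h i, (h < n)%nat -> walk rel l h i -> exists l', (l' <= n - 1)%nat /\ walk rel l' h i.
Proof.
  intros Hrel l. induction l as [l IH] using (well_founded_induction lt_wf).
  intros h i Hh [f [Hf0 [Hfl Hf]]].
  destruct (le_lt_dec l (n - 1)) as [Hl | Hl]; [exists l; split; [|exists f]; auto|].
  destruct (pigeonhole n f) as [a [b [Hab Hfab]]].
  { intros [|k] Hk; [congruence|]. apply (Hrel (f k)), Hf. lia. }
  apply (IH (l - (b - a))%nat ltac:(lia) h i Hh).
  exists (fun k => if Nat.leb k a then f k else f (k + (b - a))%nat). repeat split.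
  - exact Hf0.
  - destruct (Nat.leb_spec (l - (b - a)) a).
    + replace (l - (b - a))%nat with a by lia. rewrite Hfab, <- Hfl. f_equal. lia.
    + rewrite <- Hfl. f_equal. lia.
  - intros k Hk. destruct (Nat.leb_spec k a), (Nat.leb_spec (S k) a); try lia.
    + apply Hf; lia.
    + replace k with a by lia. rewrite Hfab.
      replace (S a + (b - a))%nat with (S b) by lia. apply Hf. lia.
    + replace (S k + (b - a))%nat with (S (k + (b - a))) by lia. apply Hf. lia.
Qed.

Lemma node_eqb_iff a b : node_eqb a b = true <-> a = b.
Proof. unfold node_eqb. destruct (node_eq_dec a b); split; congruence. Qed.

Lemma node_eqb_sym a b : node_eqb a b = node_eqb b a.
Proof. unfold node_eqb. destruct (node_eq_dec a b), (node_eq_dec b a); congruence. Qed.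

Definition idmx (p q : node) : R := if node_eqb p q then 1 else 0.

Section MatrixProducts.
Variable ns : list node.
Hypothesis ns_NoDup : NoDup ns.

Lemma lsum_node_indicator x g :
  In x ns -> lsum ns (fun r => if node_eqb r x then g r else 0) = g x.
Proof. intros. apply lsum_indicator; auto using node_eqb_iff. Qed.

Lemma mmul_assoc M N P p q : mmul ns (mmul ns M N) P p q = mmul ns M (mmul ns N P) p q.
Proof.
  unfold mmul. rewrite (lsum_ext_in _ _ (fun r => lsum ns (fun s => M p s * N s r * P r q)))
    by (intros; rewrite <- lsum_scalr; reflexivity).
  rewrite lsum_swap. apply lsum_ext_in; intros s _. rewrite <- lsum_scal.
  apply lsum_ext_in; intros; ring.
Qed.

Lemma mmul_idmx_l M p q : In p ns -> mmul ns idmx M p q = M p q.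
Proof.
  intros Hp. unfold mmul, idmx. rewrite <- (lsum_node_indicator p (fun r => M r q)) by auto.
  apply lsum_ext_in; intros r _. rewrite node_eqb_sym. destruct (node_eqb r p); ring.
Qed.

Lemma mmul_idmx_r M p q : In q ns -> mmul ns M idmx p q = M p q.
Proof.
  intros Hq. unfold mmul, idmx. rewrite <- (lsum_node_indicator q (fun r => M p r)) by auto.
  apply lsum_ext_in; intros r _. destruct (node_eqb r q); ring.
Qed.

Definition col_stochastic (M : node -> node -> R) : Prop :=
  (forall p q, 0 <= M p q) /\ (forall q, In q ns -> lsum ns (fun p => M p q) = 1).

Lemma col_stochastic_le1 M p q : col_stochastic M -> In p ns -> In q ns -> M p q <= 1.
Proof.
  intros [Hnn Hcs] Hp Hq. rewrite <- (Hcs q Hq).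
  apply (lsum_term ns (fun p => M p q)); auto.
Qed.

Lemma col_stochastic_idmx : col_stochastic idmx.
Proof.
  split.
  - intros p q. unfold idmx. destruct (node_eqb p q); lra.
  - intros q Hq. exact (lsum_node_indicator q (fun _ => 1) Hq).
Qed.

Lemma col_stochastic_mmul M N :
  col_stochastic M -> col_stochastic N -> col_stochastic (mmul ns M N).
Proof.
  intros [HM HMc] [HN HNc]. split.
  - intros p q. apply lsum_nonneg; intros. apply Rmult_le_pos; auto.
  - intros q Hq. unfold mmul. rewrite lsum_swap, <- (HNc q Hq).
    apply lsum_ext_in; intros r Hr. rewrite lsum_scalr, HMc by auto. ring.
Qed.

Definition norm1 (z : node -> R) : R := lsum ns (fun p => Rabs (z p)).

(* Dobrushin contraction: since [z] sums to zero, row [p0] may be lowered by [eta] without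
   changing [W z], and the lowered matrix has column sums [1 - eta]. *)
Lemma norm1_mmul_contract W z eta p0 :
  col_stochastic W -> In p0 ns -> (forall r, In r ns -> eta <= W p0 r) -> lsum ns z = 0 ->
  norm1 (fun p => lsum ns (fun r => W p r * z r)) <= (1 - eta) * norm1 z.
Proof.
  intros [Hnn Hcs] Hp0 Hrow Hz. unfold norm1.
  set (W' := fun p r => W p r - eta * idmx p p0).
  assert (HW'_nonneg : forall p r, In r ns -> 0 <= W' p r).
  { intros p r Hr. unfold W', idmx. destruct (node_eqb p p0) eqn:Hpp0.
    - apply node_eqb_iff in Hpp0. subst. specialize (Hrow r Hr). lra.
    - specialize (Hnn p r). lra. }
  assert (HW'z : forall p, lsum ns (fun r => W p r * z r) = lsum ns (fun r => W' p r * z r)).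
  { intros p. unfold W'.
    rewrite (lsum_ext_in _ (fun r => (W p r - eta * idmx p p0) * z r)
      (fun r => W p r * z r - (eta * idmx p p0) * z r)) by (intros; ring).
    rewrite lsum_minus, lsum_scal, Hz. ring. }
  assert (HW'col : forall r, In r ns -> lsum ns (fun p => W' p r) = 1 - eta).
  { intros r Hr. unfold W'. rewrite lsum_minus, lsum_scal, Hcs by auto.
    unfold idmx. rewrite (lsum_node_indicator p0 (fun _ => 1)) by auto. ring. }
  apply Rle_trans with (lsum ns (fun p => lsum ns (fun r => W' p r * Rabs (z r)))).
  - apply lsum_le; intros p _. rewrite HW'z.
    eapply Rle_trans; [apply lsum_abs|]. apply lsum_le; intros r Hr.
    rewrite Rabs_mult, (Rabs_right (W' p r)) by (apply Rle_ge, HW'_nonneg; auto). lra.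
  - rewrite lsum_swap, <- lsum_scal. apply Req_le, lsum_ext_in; intros r Hr.
    rewrite lsum_scalr, HW'col by auto. reflexivity.
Qed.

Variable M : nat -> node -> node -> R.
Hypothesis M_stoch : forall k, col_stochastic (M k).

Fixpoint mprod (t n : nat) : node -> node -> R :=
  match n with
  | O => idmx
  | S n' => mmul ns (M (t + n')) (mprod t n')
  end.

Lemma mprod_col_stochastic t n : col_stochastic (mprod t n).
Proof.
  induction n; simpl; [apply col_stochastic_idmx | apply col_stochastic_mmul; auto].
Qed.

Lemma mprod_add t a b p q :
  In p ns -> mprod t (a + b) p q = mmul ns (mprod (t + a) b) (mprod t a) p q.
Proof.
  revert p q; induction b as [|b IH]; intros p q Hp.
  - rewrite Nat.add_0_r. simpl. rewrite mmul_idmx_l; auto.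
  - rewrite Nat.add_succ_r. simpl.
    transitivity (mmul ns (M (t + (a + b))) (mmul ns (mprod (t + a) b) (mprod t a)) p q).
    { unfold mmul at 1 3. apply lsum_ext_in; intros r Hr. rewrite IH; auto. }
    rewrite <- mmul_assoc, Nat.add_assoc. reflexivity.
Qed.

Section Ergodicity.
Variables (K : nat) (eta : R) (good : node -> Prop) (p0 : node).
Hypothesis K_pos : (1 <= K)%nat.
Hypothesis good_in : forall p, good p -> In p ns.
Hypothesis p0_good : good p0.
Hypothesis window_lower : forall u p r, good p -> In r ns -> eta <= mprod u K p r.

Lemma mprod_good_row_lower t n p q :
  good p -> In q ns -> (K <= n)%nat -> eta <= mprod t n p q.
Proof.
  intros Hp Hq Hn. destruct (mprod_col_stochastic t (n - K)) as [Hnn Hcs].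
  replace n with ((n - K) + K)%nat by lia. rewrite mprod_add by auto. unfold mmul.
  rewrite <- (Rmult_1_r eta), <- (Hcs q Hq), <- lsum_scal.
  apply lsum_le; intros r Hr. apply Rmult_le_compat_r; auto.
Qed.

Lemma eta_le1 : eta <= 1.
Proof.
  apply Rle_trans with (mprod 0 K p0 p0); auto.
  apply col_stochastic_le1; auto. apply mprod_col_stochastic.
Qed.

Lemma norm1_mprod_col_diff t a b q n : In a ns -> In b ns -> (q * K <= n)%nat ->
  norm1 (fun p => mprod t n p a - mprod t n p b) <= 2 * (1 - eta) ^ q.
Proof.
  intros Ha Hb. revert n. induction q as [|q IH]; intros n Hn.
  - destruct (mprod_col_stochastic t n) as [Hnn Hcs]. simpl. unfold norm1.
    apply Rle_trans with (lsum ns (fun p => mprod t n p a + mprod t n p b)).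
    + apply lsum_le; intros p _. pose proof (Hnn p a). pose proof (Hnn p b).
      unfold Rabs; destruct (Rcase_abs _); lra.
    + rewrite lsum_plus, !Hcs by auto. lra.
  - simpl in Hn. set (n' := (n - K)%nat).
    destruct (mprod_col_stochastic t n') as [_ Hcs].
    assert (Hsplit : forall p, In p ns -> mprod t n p a - mprod t n p b =
      lsum ns (fun r => mprod (t + n') K p r * (mprod t n' r a - mprod t n' r b))).
    { intros p Hp. replace n with (n' + K)%nat by (unfold n'; lia).
      rewrite !mprod_add by auto. unfold mmul. rewrite <- lsum_minus.
      apply lsum_ext_in; intros; ring. }
    unfold norm1. rewrite (lsum_ext_in _ _ _ (fun p Hp => f_equal Rabs (Hsplit p Hp))).
    eapply Rle_trans; [apply (norm1_mmul_contract _ _ eta p0)|].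
    + apply mprod_col_stochastic.
    + auto.
    + auto.
    + rewrite lsum_minus, !Hcs by auto. ring.
    + pose proof eta_le1.
      replace (2 * (1 - eta) ^ S q) with ((1 - eta) * (2 * (1 - eta) ^ q)) by (simpl; ring).
      apply Rmult_le_compat_l; [lra|]. apply IH. unfold n'. lia.
Qed.

Lemma mprod_close_to_mixture t n p q x : In p ns -> In q ns ->
  (forall r, In r ns -> 0 <= x r) -> lsum ns x = 1 ->
  Rabs (mprod t n p q - lsum ns (fun r => mprod t n p r * x r)) <= 2 * (1 - eta) ^ (n / K).
Proof.
  intros Hp Hq Hx Hx1. set (bound := 2 * (1 - eta) ^ (n / K)).
  assert (Hcol : forall r, In r ns -> Rabs (mprod t n p q - mprod t n p r) <= bound).
  { intros r Hr. eapply Rle_trans; [|apply (norm1_mprod_col_diff t q r (n / K) n); auto].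
    - apply (lsum_term ns (fun p => Rabs (mprod t n p q - mprod t n p r))); auto.
      intros; apply Rabs_pos.
    - rewrite Nat.mul_comm. apply Nat.Div0.mul_div_le. }
  rewrite <- (Rmult_1_r (mprod t n p q)), <- Hx1, <- lsum_scal, <- lsum_minus.
  eapply Rle_trans; [apply lsum_abs|].
  rewrite <- (Rmult_1_r bound), <- Hx1, <- lsum_scal.
  apply lsum_le; intros r Hr.
  rewrite <- Rmult_minus_distr_r, Rabs_mult, (Rabs_right (x r)) by (apply Rle_ge; auto).
  apply Rmult_le_compat_r; auto.
Qed.

Theorem weak_ergodicity : exists xi : nat -> node -> R,
  (forall k, (forall p, In p ns -> 0 <= xi k p) /\ lsum ns (xi k) = 1) /\
  (forall k t p q, (t <= k)%nat -> In p ns -> In q ns ->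
     Rabs (mprod t (S (k - t)) p q - xi k p) <= 2 * (1 - eta) ^ (S (k - t) / K)) /\
  (forall k p, good p -> eta <= xi k p).
Proof.
  assert (Hp0 : In p0 ns) by auto.
  (* At least [K] factors are needed for the lower bound; for [k < K - 1] the claimed bound
     is [2], which holds for any pair of stochastic columns. *)
  exists (fun k p => mprod 0 (S (Nat.max k (K - 1))) p p0). split; [|split].
  - intros k. destruct (mprod_col_stochastic 0 (S (Nat.max k (K - 1)))) as [Hnn Hcs]. auto.
  - intros k t p q Htk Hp Hq. destruct (le_lt_dec (K - 1) k) as [Hk | Hk].
    + rewrite Nat.max_l by lia. destruct (mprod_col_stochastic 0 t) as [Hnn Hcs].
      replace (S k) with (t + S (k - t))%nat by lia. rewrite mprod_add by auto.
      apply mprod_close_to_mixture; auto.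
    + rewrite Nat.div_small, pow_O by lia.
      pose proof (col_stochastic_le1 _ p q (mprod_col_stochastic t (S (k - t))) Hp Hq).
      pose proof (proj1 (mprod_col_stochastic t (S (k - t))) p q).
      set (n := S (Nat.max k (K - 1))).
      pose proof (col_stochastic_le1 _ p p0 (mprod_col_stochastic 0 n) Hp Hp0).
      pose proof (proj1 (mprod_col_stochastic 0 n) p p0).
      unfold Rabs; destruct (Rcase_abs _); lra.
  - intros k p Hp. apply mprod_good_row_lower; auto. lia.
Qed.

End Ergodicity.
End MatrixProducts.

Lemma pow_le_compat_exp_le1 (x : R) a b : 0 <= x <= 1 -> (a <= b)%nat -> x ^ b <= x ^ a.
Proof.
  intros Hx Hab. replace b with (a + (b - a))%nat by lia. rewrite pow_add.
  assert (0 <= x ^ a) by (apply pow_le; lra).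
  assert (x ^ (b - a) <= 1) by (rewrite <- (pow1 (b - a)); apply pow_incr; lra).
  nra.
Qed.

Lemma geometric_rate eta K : 0 < eta < 1 -> (1 <= K)%nat ->
  let rho := Rpower (1 - eta) (/ INR K) in
  0 < rho < 1 /\
  forall j, 2 * (1 - eta) ^ (S j / K) <= 2 * (1 + / eta) / (1 - eta) * rho ^ j.
Proof.
  intros Heta HK rho.
  assert (HKpos : 0 < INR K) by (apply lt_0_INR; lia).
  assert (Hrho0 : 0 < rho) by apply exp_pos.
  assert (HrhoK : rho ^ K = 1 - eta).
  { unfold rho. rewrite <- Rpower_pow by assumption. rewrite Rpower_mult, Rinv_l by lra.
    apply Rpower_1. lra. }
  assert (Hrho1 : rho < 1).
  { unfold rho, Rpower. apply Rlt_le_trans with (exp 0); [apply exp_increasing | rewrite exp_0; lra].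
    assert (ln (1 - eta) < 0) by (rewrite <- ln_1; apply ln_increasing; lra).
    assert (0 < / INR K) by (apply Rinv_0_lt_compat; lra). nra. }
  split; [lra|]. intros j. set (q := (S j / K)%nat).
  assert (Hjq : (j < S q * K)%nat).
  { pose proof (Nat.mul_succ_div_gt (S j) K ltac:(lia)). unfold q. lia. }
  assert (Hpow : (1 - eta) * (1 - eta) ^ q <= rho ^ j).
  { change ((1 - eta) * (1 - eta) ^ q) with ((1 - eta) ^ S q). rewrite <- HrhoK, <- pow_mult.
    apply pow_le_compat_exp_le1; [lra | lia]. }
  assert (0 <= (1 - eta) ^ q) by (apply pow_le; lra).
  assert (0 < / eta) by (apply Rinv_0_lt_compat; lra).
  assert (HC : 2 * (1 + / eta) / (1 - eta) * ((1 - eta) * (1 - eta) ^ q)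
               = 2 * (1 + / eta) * (1 - eta) ^ q) by (field; lra).
  apply Rle_trans with (2 * (1 + / eta) / (1 - eta) * ((1 - eta) * (1 - eta) ^ q)).
  - rewrite HC. nra.
  - apply Rmult_le_compat_l; [|exact Hpow].
    apply Rmult_le_pos; [lra | apply Rlt_le, Rinv_0_lt_compat; lra].
Qed.

Section AugmentedSystem.
Variables (I : nat) (E : nat -> nat -> bool) (A : nat -> nat -> R) (m : R)
  (T D : nat) (ik : nat -> nat) (dk : nat -> nat -> nat).
Hypothesis HI : (1 <= I)%nat.
Hypothesis HEV : forall j i, E j i = true -> (j < I)%nat /\ (i < I)%nat.
Hypothesis HEloop : forall i, E i i = false.
Hypothesis HEsc : forall i j, (i < I)%nat -> (j < I)%nat -> i <> j ->
  clos_trans nat (fun a b => E a b = true) i j.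
Hypothesis Hm : 0 < m < 1.
Hypothesis HAcol : forall j, (j < I)%nat -> lsum (seq 0 I) (fun i => A i j) = 1.
Hypothesis HAdiag : forall i, (i < I)%nat -> A i i >= m.
Hypothesis HAedge : forall i j, E j i = true -> A i j >= m.
Hypothesis HAzero : forall i j, (i < I)%nat -> (j < I)%nat -> i <> j -> E j i = false ->
  A i j = 0.
Hypothesis Hik : forall k, (ik k < I)%nat.
Hypothesis HT : forall k i, (i < I)%nat -> exists s, (k <= s < k + T)%nat /\ ik s = i.
Hypothesis Hdk : forall k j, E j (ik k) = true -> (dk k j <= D)%nat.

Local Notation ns := (nodes I E D).
Local Notation Ah := (Ahat A I E D ik dk).
Local Notation P := (mprod ns Ah).

Lemma in_Ag h : In (Ag h) ns <-> (h < I)%nat.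
Proof.
  unfold nodes. rewrite in_app_iff, in_map_iff. split.
  - intros [[x [Hx Hin]] | H].
    + inversion Hx; subst. apply in_seq in Hin. lia.
    + apply in_flat_map in H as [j [_ H]]. apply in_flat_map in H as [i [_ H]].
      destruct (E j i); [|destruct H]. apply in_map_iff in H as [? [H _]]. discriminate.
  - intros. left. exists h. split; auto. apply in_seq. lia.
Qed.

Lemma in_Buf j i d : In (Buf j i d) ns <-> E j i = true /\ (d <= D)%nat.
Proof.
  unfold nodes. rewrite in_app_iff, in_map_iff. split.
  - intros [[x [Hx _]] | H]; [discriminate|].
    apply in_flat_map in H as [j' [_ H]]. apply in_flat_map in H as [i' [_ H]].
    destruct (E j' i') eqn:Ee; [|destruct H]. apply in_map_iff in H as [d' [H Hd]].
    inversion H; subst. apply in_seq in Hd. split; auto. lia.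
  - intros [He Hd]. right. destruct (HEV _ _ He).
    apply in_flat_map. exists j. split; [apply in_seq; lia|].
    apply in_flat_map. exists i. split; [apply in_seq; lia|].
    rewrite He. apply in_map, in_seq. lia.
Qed.

Lemma nodes_NoDup : NoDup ns.
Proof.
  unfold nodes. apply NoDup_app.
  - apply Injective_map_NoDup; [intros a b H; inversion H; auto | apply seq_NoDup].
  - apply NoDup_flat_map_key with (key := fun z => match z with Buf j _ _ => j | Ag h => h end).
    + apply seq_NoDup.
    + intros j _.
      apply NoDup_flat_map_key with (key := fun z => match z with Buf _ i _ => i | Ag h => h end).
      * apply seq_NoDup.
      * intros i _. destruct (E j i); [|constructor].
        apply Injective_map_NoDup; [intros a b H; inversion H; auto | apply seq_NoDup].
      * intros i z _ Hz. destruct (E j i); [|destruct Hz].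
        apply in_map_iff in Hz as [? [<- _]]. reflexivity.
    + intros j z _ Hz. apply in_flat_map in Hz as [i [_ Hz]].
      destruct (E j i); [|destruct Hz]. apply in_map_iff in Hz as [? [<- _]]. reflexivity.
  - intros a Ha Hb. apply in_map_iff in Ha as [h [<- _]].
    apply in_flat_map in Hb as [j [_ H]]. apply in_flat_map in H as [i [_ H]].
    destruct (E j i); [|destruct H]. apply in_map_iff in H as [? [H _]]. discriminate.
Qed.

Lemma lsum_nodes f : lsum ns f = lsum (seq 0 I) (fun h => f (Ag h)) +
  lsum (seq 0 I) (fun j => lsum (seq 0 I) (fun i =>
    if E j i then lsum (seq 0 (S D)) (fun d => f (Buf j i d)) else 0)).
Proof.
  unfold nodes. rewrite lsum_app, lsum_map, lsum_flat_map. f_equal.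
  apply lsum_ext_in; intros j _. rewrite lsum_flat_map.
  apply lsum_ext_in; intros i _. destruct (E j i); [apply lsum_map | reflexivity].
Qed.

Lemma lsum_seq_indicator n x g : (x < n)%nat ->
  lsum (seq 0 n) (fun r => if Nat.eqb r x then g r else 0) = g x.
Proof. intros. apply lsum_indicator; [apply Nat.eqb_eq | apply seq_NoDup | apply in_seq; lia]. Qed.

Ltac destruct_node_eqb :=
  unfold idmx, node_eqb;
  repeat match goal with |- context [node_eq_dec ?a ?b] => destruct (node_eq_dec a b) end.
Ltac destruct_nat_tests :=
  repeat (match goal with
  | |- context [Nat.eqb ?a ?b] => destruct (Nat.eqb_spec a b)
  | |- context [Nat.ltb ?a ?b] => destruct (Nat.ltb_spec a b)
  | |- context [E ?a ?b] => let e := fresh "Ee" in destruct (E a b) eqn:e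
  end; cbn -[Nat.eqb Nat.ltb] in *).

Lemma Smat_nonneg k p q : 0 <= Smat A E D ik k p q.
Proof.
  destruct p as [h' | a b [|e]], q as [h | a' b' d']; simpl;
    repeat match goal with |- context [if ?b then _ else _] => destruct b eqn:? end; try lra.
  - apply Nat.eqb_eq in Heqb0; subst. apply Rle_trans with m; [lra | apply Rge_le, HAdiag, Hik].
  - apply andb_true_iff in Heqb0 as [H1 H2]. apply andb_true_iff in H1 as [H1 _].
    apply Nat.eqb_eq in H1; subst. apply Rle_trans with m; [lra | apply Rge_le, HAedge, H2].
Qed.

Lemma Cmat_nonneg k p q : 0 <= Cmat E D ik dk k p q.
Proof. unfold Cmat. destruct (inRk _ _ _ _ _ _); destruct_node_eqb; lra. Qed.

Lemma Ahat_nonneg k p q : 0 <= Ah k p q.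
Proof.
  apply lsum_nonneg. intros. apply Rmult_le_pos; [apply Smat_nonneg | apply Cmat_nonneg].
Qed.

(* Right multiplication by [C^k] redirects every column in [R^k] to column [ik k]. *)
Lemma Ahat_col k p q : In q ns -> Ah k p q =
  if inRk E D ik dk k q then Smat A E D ik k p (Ag (ik k)) else Smat A E D ik k p q.
Proof.
  intros Hq. unfold Ahat, mmul, Cmat. destruct (inRk _ _ _ _ _ _).
  - rewrite <- (lsum_node_indicator ns nodes_NoDup (Ag (ik k)) (Smat A E D ik k p))
      by (apply in_Ag; auto).
    apply lsum_ext_in; intros r _. destruct (node_eqb r _); ring.
  - rewrite <- (lsum_node_indicator ns nodes_NoDup q (Smat A E D ik k p)) by auto.
    apply lsum_ext_in; intros r _. destruct (node_eqb r _); ring.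
Qed.

Lemma Smat_col_Ag_inactive k p h : h <> ik k -> Smat A E D ik k p (Ag h) = idmx p (Ag h).
Proof. intros Hh. destruct p as [h' | a b [|e]]; simpl; destruct_node_eqb; destruct_nat_tests; congruence. Qed.

Lemma Smat_col_Buf k p j i d : (d <= D)%nat ->
  Smat A E D ik k p (Buf j i d) = idmx p (Buf j i (if Nat.ltb d D then S d else d)).
Proof.
  intros Hd. destruct p as [h' | a b [|e]], d as [|d]; cbn -[Nat.eqb Nat.ltb];
    destruct_nat_tests; destruct_node_eqb; try congruence; try lia;
    match goal with H : Buf _ _ _ = Buf _ _ _ |- _ => inversion H; subst end; lia || congruence.
Qed.

Lemma Smat_colsum_active k : lsum ns (fun p => Smat A E D ik k p (Ag (ik k))) = 1.
Proof.
  set (h := ik k). assert (Hh : (h < I)%nat) by apply Hik.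
  assert (Hagents : lsum (seq 0 I) (fun h' => Smat A E D ik k (Ag h') (Ag h)) = A h h).
  { rewrite <- (lsum_seq_indicator I h (fun _ => A h h)) by auto.
    apply lsum_ext_in; intros h' _. simpl.
    destruct (Nat.eqb_spec h' h) as [->|]; [rewrite Nat.eqb_refl|]; reflexivity. }
  assert (Hbuffers : lsum (seq 0 I) (fun j => lsum (seq 0 I) (fun i =>
      if E j i then lsum (seq 0 (S D)) (fun d => Smat A E D ik k (Buf j i d) (Ag h)) else 0))
    = lsum (seq 0 I) (fun i => if E h i then A i h else 0)).
  { rewrite <- (lsum_seq_indicator I h (fun j => lsum (seq 0 I) (fun i =>
      if E j i then A i h else 0))) by auto.
    apply lsum_ext_in; intros j _. destruct (Nat.eqb_spec j h) as [->|Hjh].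
    - apply lsum_ext_in; intros i _. destruct (E h i) eqn:Ee; [|reflexivity].
      cbn [seq]. rewrite lsum_cons, lsum_zero by (intros [|d] Hd; [apply in_seq in Hd; lia | reflexivity]).
      simpl. rewrite Nat.eqb_refl, Ee. simpl. fold h. ring.
    - apply lsum_zero; intros i _. destruct (E j i); [|reflexivity].
      apply lsum_zero; intros [|d] _; [|reflexivity].
      simpl. fold h. apply Nat.eqb_neq in Hjh. rewrite Hjh. reflexivity. }
  rewrite lsum_nodes, Hagents, Hbuffers.
  rewrite <- (HAcol h Hh), <- (lsum_seq_indicator I h (fun i => A i h)) by auto.
  rewrite <- lsum_plus. apply lsum_ext_in. intros i Hi. apply in_seq in Hi.
  destruct (Nat.eqb_spec i h) as [->|Hih].
  - rewrite HEloop. ring.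
  - destruct (E h i) eqn:Ee; [ring|]. rewrite HAzero by (auto; lia). ring.
Qed.

Lemma Smat_colsum k q : In q ns -> lsum ns (fun p => Smat A E D ik k p q) = 1.
Proof.
  intros Hq. destruct q as [h | j i d].
  - destruct (Nat.eq_dec h (ik k)) as [->|Hh]; [apply Smat_colsum_active|].
    rewrite (lsum_ext_in _ _ (fun p => idmx p (Ag h))) by (intros; apply Smat_col_Ag_inactive; auto).
    apply col_stochastic_idmx; auto using nodes_NoDup.
  - apply in_Buf in Hq as [He Hd].
    rewrite (lsum_ext_in _ _ (fun p => idmx p (Buf j i (if Nat.ltb d D then S d else d))))
      by (intros; apply Smat_col_Buf; auto).
    apply col_stochastic_idmx; auto using nodes_NoDup.
    apply in_Buf. split; auto. destruct (Nat.ltb_spec d D); lia.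
Qed.

Lemma Ahat_col_stochastic k : col_stochastic ns (Ah k).
Proof.
  split; [apply Ahat_nonneg|]. intros q Hq.
  rewrite (lsum_ext_in _ _ _ (fun p _ => Ahat_col k p q Hq)).
  destruct (inRk _ _ _ _ _ _); [apply Smat_colsum_active | apply Smat_colsum; auto].
Qed.

Lemma Aprod_mprod k t p q : In q ns -> Aprod A I E D ik dk k t p q = P t (S (k - t)) p q.
Proof.
  intros Hq. unfold Aprod. generalize (k - t)%nat as n. intros n. revert p.
  induction n as [|n IH]; intros p.
  - simpl. rewrite mmul_idmx_r, Nat.add_0_r; auto using nodes_NoDup.
  - simpl. unfold mmul at 1 2. apply lsum_ext_in; intros r _. rewrite IH. reflexivity.
Qed.

(* Mass at node [x] at time [u] is found at [y] after [n] steps with weight at least [m ^ n]. *)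
Definition reach (u n : nat) (x y : node) : Prop := m ^ n <= P u n y x.

Lemma reach_refl u x : reach u 0 x x.
Proof. unfold reach, idmx. simpl. destruct_node_eqb; [lra | congruence]. Qed.

Lemma reach_step u n x y z :
  In y ns -> reach u n x y -> m <= Ah (u + n) z y -> reach u (S n) x z.
Proof.
  unfold reach. intros Hy Hxy Hzy. simpl. unfold mmul.
  eapply Rle_trans; [|apply (lsum_term ns (fun r => Ah (u + n) z r * P u n r x) y Hy)].
  - assert (0 <= m ^ n) by (apply pow_le; lra). nra.
  - intros r _. apply Rmult_le_pos; [apply Ahat_nonneg|].
    apply (proj1 (mprod_col_stochastic ns nodes_NoDup Ah Ahat_col_stochastic u n)).
Qed.

Lemma Ahat_agent_keep w h : (h < I)%nat -> m <= Ah w (Ag h) (Ag h).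
Proof.
  intros Hh. rewrite Ahat_col by (apply in_Ag; auto). simpl. rewrite Nat.eqb_refl.
  destruct (Nat.eqb_spec h (ik w)) as [->|]; [apply Rge_le, HAdiag; auto | lra].
Qed.

Lemma Ahat_agent_send w j i : E j i = true -> ik w = j -> m <= Ah w (Buf j i 0) (Ag j).
Proof.
  intros He Hw. rewrite Ahat_col by (apply in_Ag; apply HEV in He; tauto). simpl. subst.
  rewrite Nat.eqb_refl, He. apply Rge_le, HAedge; auto.
Qed.

Lemma Ahat_buffer_deliver w j i d : E j i = true -> (d <= D)%nat ->
  inRk E D ik dk w (Buf j i d) = true -> m <= Ah w (Ag i) (Buf j i d).
Proof.
  intros He Hd Hin. rewrite Ahat_col by (apply in_Buf; auto). rewrite Hin.
  simpl in Hin. apply andb_true_iff in Hin as [Hin _]. apply andb_true_iff in Hin as [Hin _].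
  apply andb_true_iff in Hin as [Hin _]. apply Nat.eqb_eq in Hin. subst. simpl.
  rewrite !Nat.eqb_refl. apply Rge_le, HAdiag; auto.
Qed.

Lemma Ahat_buffer_shift w j i d : E j i = true -> (d <= D)%nat ->
  inRk E D ik dk w (Buf j i d) = false ->
  m <= Ah w (Buf j i (if Nat.ltb d D then S d else d)) (Buf j i d).
Proof.
  intros He Hd Hin. rewrite Ahat_col by (apply in_Buf; auto). rewrite Hin, Smat_col_Buf by auto.
  destruct_node_eqb; [lra | congruence].
Qed.

(* The delay bound [dk <= D] forces an active agent to read its oldest buffer slots. *)
Lemma inRk_oldest w j i : E j i = true -> ik w = i -> inRk E D ik dk w (Buf j i D) = true.
Proof.
  intros He Hw. subst i. assert (Hd : (dk w j <= D)%nat) by (apply Hdk; auto).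
  unfold inRk, tau. simpl. rewrite Nat.eqb_refl, He, Nat.leb_refl. simpl.
  rewrite andb_true_r. apply Z.leb_le.
  pose proof (Z.le_max_r (tauS E D ik dk w (ik w) j) (Z.of_nat w - Z.of_nat (dk w j))). lia.
Qed.

Lemma reach_agent_stay u n n' x h :
  (h < I)%nat -> (n <= n')%nat -> reach u n x (Ag h) -> reach u n' x (Ag h).
Proof.
  intros Hh Hn H. replace n' with (n + (n' - n))%nat by lia.
  induction (n' - n)%nat as [|g IH]; [rewrite Nat.add_0_r; auto|].
  rewrite Nat.add_succ_r. eapply reach_step; eauto; [apply in_Ag; auto | apply Ahat_agent_keep; auto].
Qed.

Lemma reach_oldest_delivered j i s : E j i = true -> ik s = i ->
  forall g u n x, s = (u + n + g)%nat -> reach u n x (Buf j i D) -> reach u (S (s - u)) x (Ag i).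
Proof.
  intros He Hs. assert (Hi : (i < I)%nat) by (apply HEV in He; tauto).
  assert (HB : In (Buf j i D) ns) by (apply in_Buf; auto).
  induction g as [|g IH]; intros u n x Hsg H.
  - replace (S (s - u)) with (S n) by lia. eapply reach_step; eauto.
    apply Ahat_buffer_deliver; auto. apply inRk_oldest; auto. rewrite <- Hs. f_equal. lia.
  - destruct (inRk E D ik dk (u + n) (Buf j i D)) eqn:Hin.
    + apply reach_agent_stay with (S n); auto; [lia|].
      eapply reach_step; eauto. apply Ahat_buffer_deliver; auto.
    + apply (IH u (S n)); [lia|]. eapply reach_step; eauto.
      pose proof (Ahat_buffer_shift (u + n) j i D He (le_n _) Hin) as Hb.
      rewrite Nat.ltb_irrefl in Hb. exact Hb.
Qed.

Lemma reach_buffer_to_agent j i : E j i = true -> forall e d u n x, (D - d = e)%nat ->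
  (d <= D)%nat -> reach u n x (Buf j i d) -> reach u (n + e + T) x (Ag i).
Proof.
  intros He. assert (Hi : (i < I)%nat) by (apply HEV in He; tauto).
  induction e as [|e IH]; intros d u n x Hde Hd H.
  - replace d with D in H by lia. rewrite Nat.add_0_r.
    destruct (HT (u + n) i Hi) as [s [Hs1 Hs2]].
    apply reach_agent_stay with (S (s - u)); auto; [lia|].
    apply (reach_oldest_delivered j i s He Hs2 (s - u - n) u n); auto. lia.
  - destruct (inRk E D ik dk (u + n) (Buf j i d)) eqn:Hin.
    + apply reach_agent_stay with (S n); auto; [lia|].
      eapply reach_step; eauto; [apply in_Buf; auto | apply Ahat_buffer_deliver; auto].
    + replace (n + S e)%nat with (S n + e)%nat by lia. apply (IH (S d)); [lia | lia|].
      eapply reach_step; eauto; [apply in_Buf; auto|].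
      pose proof (Ahat_buffer_shift (u + n) j i d He Hd Hin) as Hb.
      destruct (Nat.ltb_spec d D); [exact Hb | lia].
Qed.

Lemma reach_hop u n x j i :
  E j i = true -> reach u n x (Ag j) -> reach u (n + (2 * T + D)) x (Ag i).
Proof.
  intros He H. destruct (HEV _ _ He) as [Hj Hi].
  destruct (HT (u + n) j Hj) as [s [Hs1 Hs2]].
  assert (Hwait : reach u (s - u) x (Ag j)) by (apply reach_agent_stay with n; auto; lia).
  assert (Hsent : reach u (S (s - u)) x (Buf j i 0)).
  { eapply reach_step; eauto; [apply in_Ag; auto|].
    apply Ahat_agent_send; auto. rewrite <- Hs2. f_equal. lia. }
  apply reach_agent_stay with (S (s - u) + D + T)%nat; auto; [lia|].
  apply (reach_buffer_to_agent j i He D 0); auto; lia.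
Qed.

Lemma reach_walk l : forall f u n x, (forall k, (k < l)%nat -> E (f k) (f (S k)) = true) ->
  reach u n x (Ag (f 0%nat)) -> reach u (n + l * (2 * T + D)) x (Ag (f l)).
Proof.
  induction l as [|l IH]; intros f u n x Hf H; [rewrite Nat.add_0_r; auto|].
  replace (n + S l * (2 * T + D))%nat with (n + l * (2 * T + D) + (2 * T + D))%nat by lia.
  apply reach_hop with (f l); auto.
Qed.

(* Any start is within [D + T] steps of some agent, and any two agents are joined by a walk
   of at most [I - 1] edges, each crossed within [2 T + D] steps; in total at most [K1]. *)
Lemma reach_all u x i : In x ns -> (i < I)%nat -> reach u (K1 I T D) x (Ag i).
Proof.
  intros Hx Hi.
  assert (Hstart : exists h, (h < I)%nat /\ reach u (D + T) x (Ag h)).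
  { destruct x as [h | j i' d].
    - apply in_Ag in Hx. exists h. split; auto.
      apply reach_agent_stay with 0%nat; auto; [lia | apply reach_refl].
    - apply in_Buf in Hx as [He Hd]. assert (Hi' : (i' < I)%nat) by (apply HEV in He; tauto).
      exists i'. split; auto. apply reach_agent_stay with (0 + (D - d) + T)%nat; auto; [lia|].
      apply (reach_buffer_to_agent j i' He (D - d) d); auto. apply reach_refl. }
  destruct Hstart as [h [Hh Hstart]].
  assert (Hwalk : exists l, (l <= I - 1)%nat /\ walk (fun a b => E a b = true) l h i).
  { destruct (Nat.eq_dec h i) as [<-|Hhi].
    - exists 0%nat. split; [lia|]. exists (fun _ => h). repeat split. intros; lia.
    - destruct (clos_trans_walk _ h i (HEsc h i Hh Hi Hhi)) as [l Hl].
      apply (walk_shorten _ I) with l; auto. intros a b Hab. apply (HEV a b Hab). }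
  destruct Hwalk as [l [Hl [f [Hf0 [Hfl Hf]]]]]. subst h i.
  apply reach_agent_stay with (D + T + l * (2 * T + D))%nat; auto; [|apply reach_walk; auto].
  unfold K1. assert (l * (2 * T + D) <= (I - 1) * (2 * T + D))%nat by (apply Nat.mul_le_mono_r; auto).
  nia.
Qed.

Lemma K1_pos : (1 <= K1 I T D)%nat.
Proof. destruct (HT 0 0 ltac:(lia)) as [s Hs]. unfold K1. nia. Qed.

Theorem augmented_weak_ergodicity : exists xi : nat -> node -> R,
  (forall k, (forall p, In p ns -> 0 <= xi k p) /\ lsum ns (xi k) = 1) /\
  (forall k t p q, (t <= k)%nat -> In p ns -> In q ns ->
     Rabs (Aprod A I E D ik dk k t p q - xi k p)
       <= 2 * (1 - m ^ K1 I T D) ^ (S (k - t) / K1 I T D)) /\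
  (forall k i, (i < I)%nat -> m ^ K1 I T D <= xi k (Ag i)).
Proof.
  set (agent := fun p => exists i, (i < I)%nat /\ p = Ag i).
  destruct (weak_ergodicity ns nodes_NoDup Ah Ahat_col_stochastic (K1 I T D) (m ^ K1 I T D)
    agent (Ag 0)) as [xi [Hstoch [Hclose Hlower]]].
  - exact K1_pos.
  - intros p [i [Hi ->]]. apply in_Ag. exact Hi.
  - exists 0%nat. split; [lia | reflexivity].
  - intros u p r [i [Hi ->]] Hr. apply reach_all; auto.
  - exists xi. split; [exact Hstoch | split].
    + intros k t p q Htk Hp Hq. rewrite Aprod_mprod by auto. apply Hclose; auto.
    + intros k i Hi. apply Hlower. exists i. auto.
Qed.

End AugmentedSystem.

Theorem lemma4
  (I : nat) (E : nat -> nat -> bool) (A : nat -> nat -> R) (m : R)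
  (T D : nat) (ik : nat -> nat) (dk : nat -> nat -> nat)
  (HI : (1 <= I)%nat)
  (HEV : forall j i, E j i = true -> (j < I)%nat /\ (i < I)%nat)
  (HEloop : forall i, E i i = false)
  (HEsc : forall i j, (i < I)%nat -> (j < I)%nat -> i <> j ->
           clos_trans nat (fun a b => E a b = true) i j)
  (Hm : 0 < m < 1)
  (HAcol : forall j, (j < I)%nat -> lsum (seq 0 I) (fun i => A i j) = 1)
  (HAdiag : forall i, (i < I)%nat -> A i i >= m)
  (HAedge : forall i j, E j i = true -> A i j >= m)
  (HAzero : forall i j, (i < I)%nat -> (j < I)%nat -> i <> j -> E j i = false ->
              A i j = 0)
  (Hik : forall k, (ik k < I)%nat)
  (HT : forall k i, (i < I)%nat -> exists s, (k <= s < k + T)%nat /\ ik s = i)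
  (Hdk : forall k j, E j (ik k) = true -> (dk k j <= D)%nat) :
  let K := K1 I T D in
  let eta := m ^ K in
  let C := 2 * (1 + / m ^ K) / (1 - m ^ K) in
  let rho := Rpower (1 - m ^ K) (/ INR K) in
  0 < rho < 1 /\
  exists xi : nat -> node -> R,
    (forall k, (forall p, In p (nodes I E D) -> 0 <= xi k p) /\
               lsum (nodes I E D) (xi k) = 1) /\
    (forall k t p q, (t <= k)%nat -> In p (nodes I E D) -> In q (nodes I E D) ->
       Rabs (Aprod A I E D ik dk k t p q - xi k p) <= C * rho ^ (k - t)) /\
    (forall k i, (i < I)%nat -> xi k (Ag i) >= eta).
Proof.
  intros K eta C rho.
  assert (HK : (1 <= K)%nat) by exact (K1_pos I T D ik HI HT).
  assert (Heta : 0 < eta < 1).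
  { split; [apply pow_lt; lra | apply pow_lt_1_compat; [lra | lia]]. }
  destruct (geometric_rate eta K Heta HK) as [Hrho Hrate].
  destruct (augmented_weak_ergodicity I E A m T D ik dk HI HEV HEloop HEsc Hm
    HAcol HAdiag HAedge HAzero Hik HT Hdk) as [xi [Hstoch [Hclose Hlower]]].
  split; [exact Hrho|]. exists xi. split; [exact Hstoch | split].
  - intros k t p q Htk Hp Hq. eapply Rle_trans; [apply Hclose; auto | apply Hrate].
  - intros k i Hi. apply Rle_ge, Hlower, Hi.
Qed.
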